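(* Assume (A1) and (A2) below. Then for any $s\in\mathcal S$ and policy $\pi$, $$\mathbb{E}_{p_s\sim\Phi_{s,t}}\Big[\Big(\mathbb{E}_{p\sim\Phi_t}\Big[\sum_{a,s'}p(a,s'\mid s)V^{\pi,p}(s')\;\Big|\;\mathbf P_s\Big]\Big)^2\Big]=\sum_{a,s'}\bar p_t(a,s'\mid s)\big(\bar V^\pi_t(s')\big)^2-\mathbb{E}_{p\sim\Phi_t}\Big[\mathbb{V}_{a,s'\sim\pi,p}\big[\bar V^\pi_t(s')\big]\Big].$$
   Context: Let $\mathcal S$ be a finite state space, $\mathcal A$ a finite action space, $r:\mathcal S\times\mathcal A\to\mathbb R$ a known bounded (deterministic) reward function and $\gamma\in[0,1)$ a discount factor. A transition function $p$ assigns to each $(s,a)$ a probability distribution $p(\cdot\mid s,a)$ on $\mathcal S$. A policy $\pi$ gives distributions $\pi(\cdot\mid s)$ on $\mathcal A$; write $p(a,s'\mid s)=\pi(a\mid s)p(s'\mid s,a)$. For a transition function $p$, the value function is $V^{\pi,p}(s)=\mathbb E\big[\sum_{h\ge 0}\gamma^h r(s_h,a_h)\mid s_0=s\big]$ with $a_h\sim\pi(\cdot\mid s_h)$, $s_{h+1}\sim p(\cdot\mid s_h,a_h)$. The transition function $p$ is a random variable with distribution $\Phi_t$; $\bar p_t(s'\mid s,a)=\mathbb E_{p\sim\Phi_t}[p(s'\mid s,a)]$, $\bar p_t(a,s'\mid s)=\pi(a\mid s)\bar p_t(s'\mid s,a)$, $\bar V^\pi_t(s)=\mathbb E_{p\sim\Phi_t}[V^{\pi,p}(s)]$.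 For a transition function $q$ and a function $f$ on $\mathcal S$, $\mathbb V_{a,s'\sim\pi,q}[f(s')]$ denotes the variance of $f(s')$ when $a\sim\pi(\cdot\mid s)$ and $s'\sim q(\cdot\mid s,a)$. For fixed $s$, $p_s$ denotes the map $a\mapsto p(\cdot\mid s,a)$, $\mathbf P_s=\{p_s(s'\mid a)\}_{s'\in\mathcal S,a\in\mathcal A}$, and $\Phi_{s,t}$ is the marginal of $\Phi_t$ on the transitions starting from $s$. Assumptions: (A1) (independent transitions) $p(s'\mid x,a)$ and $p(s'\mid y,a)$ are independent random variables if $x\neq y$; (A2) (acyclic MDP) the MDP is a directed acyclic graph, i.e., states are not visited more than once in any given episode. *)

From HB Require Import structures.
From mathcomp Require Import all_boot all_order all_algebra.
From mathcomp Require Import all_classical all_reals all_analysis.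
Set Implicit Arguments. Unset Strict Implicit. Unset Printing Implicit Defensive.
Import Order.TTheory GRing.Theory Num.Theory.
Import numFieldNormedType.Exports.
Local Open Scope classical_set_scope.
Local Open Scope ring_scope.

Section Defs.
Variables (R : realType) (S A : finType).

(* a transition function: q x a y = q(y | x, a) *)
Definition is_trans (q : S -> A -> S -> R) : Prop :=
  (forall x a y, 0 <= q x a y) /\ (forall x a, \sum_(y : S) q x a y = 1).

Definition is_policy (pi : S -> A -> R) : Prop :=
  (forall x a, 0 <= pi x a) /\ (forall x, \sum_(a : A) pi x a = 1).

(* step_reward pi r q h x = E[ r(s_h, a_h) | s_0 = x ] under pi and q *)
Fixpoint step_reward (pi : S -> A -> R) (r : S -> A -> R)
    (q : S -> A -> S -> R) (h : nat) (x : S) : R :=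
  match h with
  | 0 => \sum_(a : A) pi x a * r x a
  | h'.+1 => \sum_(a : A) pi x a * \sum_(y : S) q x a y * step_reward pi r q h' y
  end.

Definition value (gamma : R) (pi : S -> A -> R) (r : S -> A -> R)
    (q : S -> A -> S -> R) (x : S) : R :=
  limn (fun n => \sum_(h < n) gamma ^+ h * step_reward pi r q h x).

Definition var_next (pi : S -> A -> R) (q : S -> A -> S -> R) (s : S)
    (f : S -> R) : R :=
  \sum_(a : A) \sum_(y : S) pi s a * q s a y * (f y) ^+ 2
  - (\sum_(a : A) \sum_(y : S) pi s a * q s a y * f y) ^+ 2.

Context {d : measure_display} {Omega : measurableType d}.

Definition sigma_state (p : Omega -> S -> A -> S -> R) (x : S) : set (set Omega) :=
  <<s [set E | exists (a : A) (y : S) (V : set R),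
         measurable V /\ E = (fun w => p w x a y) @^-1` V] >>.

Definition independent_transitions (P : probability Omega R)
    (p : Omega -> S -> A -> S -> R) : Prop :=
  forall E : S -> set Omega, (forall x, sigma_state p x (E x)) ->
    fine (P (\bigcap_(x : S) E x)) = \prod_(x : S) fine (P (E x)).

(* There is a fixed rank on states and a fixed set T of
   absorbing terminal states; from a non-terminal state every possible
   transition strictly increases the rank, so no state is visited twice
   (except absorption in a terminal state, which ends the episode). *)
Definition acyclic_model (p : Omega -> S -> A -> S -> R) : Prop :=
  exists (rank : S -> nat) (T : {set S}),
    forall w x a y, 0 < p w x a y ->
      if x \in T then y = x else (rank x < rank y)%N.

Definition is_cond_exp (P : probability Omega R) (F : set (set Omega))
    (f g : Omega -> R) : Prop :=
  (forall V : set R, measurable V -> F (g @^-1` V)) /\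
  P.-integrable setT (EFin \o g) /\
  (forall E, F E -> (\int[P]_(w in E) (g w)%:E = \int[P]_(w in E) (f w)%:E)%E).

End Defs.

(* Write X := sum_{a,y} pi(a|s) p(s,a,y) V^{pi,p}(y) and
   h := sum_{a,y} pi(a|s) p(s,a,y) Vbar(y).  By acyclicity, the value V^{pi,p}(y) of
   any state y that can follow s is unchanged when s is made absorbing, so it only
   depends on the transitions out of the states other than s, which by (A1) are
   independent of P_s.  Hence E[X 1_E] = E[h 1_E] for every E in sigma(P_s); as h is
   itself sigma(P_s)-measurable, g = h almost surely and E[g^2] = E[h^2].  The identity
   is then the definition Var_{pi,p}[Vbar] = sum_{a,y} pi p Vbar^2 - h^2, integrated in p.
   Independence is only needed for bounded functions, where E[UV] = E[U] E[V] follows by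
   approximating U uniformly by step functions on its level sets. *)

From HB Require Import structures.
From mathcomp Require Import all_boot all_order all_algebra.
From mathcomp Require Import all_classical all_reals all_analysis.
From mathcomp Require Import measurable_realfun ring lra.
Set Implicit Arguments. Unset Strict Implicit. Unset Printing Implicit Defensive.
Import Order.TTheory GRing.Theory Num.Theory.
Import numFieldNormedType.Exports.
Import archimedean.Num.Theory archimedean.Num.Def.
Local Open Scope classical_set_scope.
Local Open Scope ring_scope.

Section bounded_measurable.
Context d (T : measurableType d) (R : realType).
Implicit Types f g : T -> R.

Definition bounded_measurable f :=
  measurable_fun setT f /\ exists M, forall w, `|f w| <= M.

Lemma bounded_measurable_cst c : bounded_measurable (fun=> c).
Proof. by split; [exact: measurable_cst | exists `|c|]. Qed.

Lemma bounded_measurableD f g :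
  bounded_measurable f -> bounded_measurable g -> bounded_measurable (fun w => f w + g w).
Proof.
move=> [mf [M hM]] [mg [N hN]]; split; first exact: measurable_funD.
by exists (M + N) => w; rewrite (le_trans (ler_normD _ _))// lerD.
Qed.

Lemma bounded_measurableB f g :
  bounded_measurable f -> bounded_measurable g -> bounded_measurable (fun w => f w - g w).
Proof.
move=> [mf [M hM]] [mg [N hN]]; split; first exact: measurable_funB.
by exists (M + N) => w; rewrite (le_trans (ler_normB _ _))// lerD.
Qed.

Lemma bounded_measurableM f g :
  bounded_measurable f -> bounded_measurable g -> bounded_measurable (fun w => f w * g w).
Proof.
move=> [mf [M hM]] [mg [N hN]]; split; first exact: measurable_funM.
by exists (M * N) => w; rewrite normrM ler_pM.
Qed.

Lemma bounded_measurable_sum (I : Type) (s : seq I) (F : I -> T -> R) :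
  (forall i, bounded_measurable (F i)) ->
  bounded_measurable (fun w => \sum_(i <- s) F i w).
Proof.
move=> hF; elim: s => [|i s IH].
  by under [X in bounded_measurable X]funext do rewrite big_nil;
    exact: bounded_measurable_cst.
by under [X in bounded_measurable X]funext do rewrite big_cons;
  exact: bounded_measurableD.
Qed.

Lemma bounded_measurable_indic (E : set T) :
  measurable E -> bounded_measurable (\1_E : T -> R).
Proof.
move=> mE; split; first exact: measurable_indic.
by exists 1 => w; rewrite indicE; case: (_ \in _); rewrite ?normr1 ?normr0.
Qed.

End bounded_measurable.

Section bounded_Rintegral.
Context d (T : measurableType d) (R : realType) (P : probability T R).
Implicit Types (D E : set T) (f : T -> R).

Lemma bounded_measurable_integrable D f : measurable D ->
  bounded_measurable f -> P.-integrable D (EFin \o f).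
Proof.
move=> mD [mf [M hM]]; apply: measurable_bounded_integrable => //.
- by rewrite (le_lt_trans (probability_le1 _ mD))// ltry.
- exact: measurable_funS mf.
- exists M; split; first by rewrite num_real.
  by move=> y yM x _; exact: le_trans (hM x) (ltW yM).
Qed.

Lemma Rintegral_sum D (I : Type) (s : seq I) (F : I -> T -> R) :
  measurable D -> (forall i, bounded_measurable (F i)) ->
  Rintegral P D (fun w => \sum_(i <- s) F i w) =
  \sum_(i <- s) Rintegral P D (F i).
Proof.
move=> mD hF; elim: s => [|i s IH].
  under eq_Rintegral do rewrite big_nil.
  by rewrite big_nil Rintegral_cst// mul0r.
under eq_Rintegral do rewrite big_cons.
rewrite big_cons RintegralD ?IH//; apply: bounded_measurable_integrable => //.
exact: bounded_measurable_sum.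
Qed.

Lemma bounded_measurable_integralE D f : measurable D -> bounded_measurable f ->
  (\int[P]_(w in D) (f w)%:E)%E = (Rintegral P D f)%:E.
Proof.
move=> mD bf; rewrite fineK//.
exact: integrable_fin_num (bounded_measurable_integrable mD bf).
Qed.

Lemma Rintegral_indic E : measurable E -> Rintegral P setT (\1_E) = fine (P E).
Proof. by move=> mE; rewrite /Rintegral integral_indic// setIT. Qed.

Lemma Rintegral_indicM E f :
  Rintegral P E f = Rintegral P setT (fun w => \1_E w * f w).
Proof.
rewrite Rintegral_mkcond; apply: eq_Rintegral => w _; rewrite patchE indicE.
by case: (w \in E); rewrite ?mul1r ?mul0r.
Qed.

Lemma normr_Rintegral_le f (B : R) : bounded_measurable f ->
  (forall w, `|f w| <= B) -> `|Rintegral P setT f| <= B.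
Proof.
move=> bf fB; have intf := bounded_measurable_integrable measurableT bf.
rewrite (le_trans (le_normr_Rintegral _ intf))//.
rewrite (@le_trans _ _ (Rintegral P setT (fun=> B)))//.
  apply: le_Rintegral => //; first exact: integrable_norm.
  exact/bounded_measurable_integrable/bounded_measurable_cst.
rewrite Rintegral_cst//; suff -> : fine (P setT) = 1 by rewrite mulr1.
by rewrite probability_setT.
Qed.

End bounded_Rintegral.

Section level_step.
Context (T : Type) (R : realType).

Definition level_step (f : T -> R) (M δ : R) (n : nat) (w : T) : R :=
  \sum_(j < n) (- M + j%:R * δ) *
    \1_(f @^-1` `[- M + j%:R * δ, - M + j.+1%:R * δ[) w.

Lemma level_step_approx (f : T -> R) (M δ : R) w : 0 < δ -> `|f w| <= M ->
  `|f w - level_step f M δ (truncn (2 * M / δ)).+1 w| <= δ.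
Proof.
move=> δ0 fwM; set N := (truncn _).+1.
have /andP[Mfw fwM'] : - M <= f w <= M by rewrite -ler_norml.
pose t := (f w + M) / δ.
have t0 : 0 <= t by apply: divr_ge0; [lra | exact: ltW].
have /andP[tl tr] := truncn_itv t0.
rewrite /t ler_pdivlMr// ltr_pdivrMr// in tl tr.
have jN : (truncn t < N)%N.
  by rewrite ltnS le_truncn// ler_pM2r ?invr_gt0//; lra.
have level_indic (j : 'I_N) : \1_(f @^-1` `[- M + j%:R * δ, - M + j.+1%:R * δ[) w
    = (j == Ordinal jN)%:R :> R.
  rewrite indicE; set A := f @^-1` _.
  suff -> : (w \in A) = (j == Ordinal jN) by [].
  apply/idP/idP.
  - move/set_mem; rewrite /A /= in_itv /= => /andP[h1 h2].
    apply/eqP/val_inj => /=; apply/esym/eqP; rewrite truncn_eq//.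
    rewrite /t ler_pdivlMr// ltr_pdivrMr// mulrSr mulrDl mul1r.
    by apply/andP; split; lra.
  - rewrite /A => /eqP ->; apply/mem_set; rewrite /= in_itv /= mulrSr mulrDl mul1r.
    by apply/andP; split; lra.
rewrite /level_step (bigD1 (Ordinal jN))// big1 => [|j /negPf hj]; last first.
  by rewrite level_indic hj mulr0.
rewrite level_indic eqxx mulr1 /=.
rewrite mulrSr mulrDl mul1r in tr.
rewrite ger0_norm; lra.
Qed.

End level_step.

Section independent_product.
Context d (T : measurableType d) (R : realType) (P : probability T R).

Lemma measurable_preimage_itv (f : T -> R) (i : interval R) :
  measurable_fun setT f -> measurable (f @^-1` [set` i]).
Proof. by move=> mf; rewrite -[_ @^-1` _]setTI; apply: mf => //; exact: measurable_itv. Qed.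

Lemma bounded_measurable_level_step (f : T -> R) M δ n :
  measurable_fun setT f -> bounded_measurable (level_step f M δ n).
Proof.
move=> mf; apply: bounded_measurable_sum => j.
apply: bounded_measurableM; first exact: bounded_measurable_cst.
exact/bounded_measurable_indic/measurable_preimage_itv.
Qed.

Lemma Rintegral_mul_of_level_sets (f k : T -> R) (c : R) :
  bounded_measurable f -> bounded_measurable k ->
  (forall a b : R, Rintegral P setT (fun w => \1_(f @^-1` `[a, b[) w * k w)
     = fine (P (f @^-1` `[a, b[)) * c) ->
  Rintegral P setT (fun w => f w * k w) = Rintegral P setT f * c.
Proof.
move=> bf bk hfk; have [mf [M fM]] := bf; have [mk [K0 kK0]] := bk.
pose K := `|K0|; have kK w : `|k w| <= K by rewrite (le_trans (kK0 w)) ?ler_norm.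
have bindic a b : bounded_measurable (\1_(f @^-1` `[a, b[) : T -> R).
  exact/bounded_measurable_indic/measurable_preimage_itv.
have level_step_mul δ n : Rintegral P setT (fun w => level_step f M δ n w * k w)
    = Rintegral P setT (level_step f M δ n) * c.
  rewrite /level_step; under eq_Rintegral do rewrite mulr_suml.
  rewrite !Rintegral_sum//; try by move=> j;
    do ![apply: bounded_measurableM | exact: bounded_measurable_cst | exact: bindic].
  rewrite mulr_suml; apply: eq_bigr => j _.
  under eq_Rintegral do rewrite -mulrA.
  rewrite !RintegralZl ?hfk ?Rintegral_indic ?mulrA//; last first.
  - exact/bounded_measurable_integrable/bounded_measurableM.
  - exact/bounded_measurable_integrable.
  - exact: measurable_preimage_itv.
have K_ge0 : 0 <= K := normr_ge0 _.
apply/eqP; rewrite -subr_eq0 -normr_le0; apply/ler_addgt0Pr => e e0; rewrite add0r.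
pose δ := e / (K + `|c| + 1).
have δ0 : 0 < δ by rewrite divr_gt0// ltr_wpDl// addr_ge0.
have δe : δ * K + δ * `|c| <= e.
  by rewrite -mulrDr mulrAC ler_pdivrMr ?ler_pM2l ?lerDl// ltr_wpDl// addr_ge0.
pose φ := level_step f M δ (truncn (2 * M / δ)).+1.
have fφ w : `|f w - φ w| <= δ by exact: level_step_approx.
have bφ : bounded_measurable φ by exact: bounded_measurable_level_step.
have intg g : bounded_measurable g -> P.-integrable setT (EFin \o g).
  exact: bounded_measurable_integrable.
have Ek : `|Rintegral P setT (fun w => f w * k w) -
           Rintegral P setT (fun w => φ w * k w)| <= δ * K.
  rewrite -RintegralB ?intg//; try exact: bounded_measurableM.
  apply: normr_Rintegral_le => [|w].
    by apply: bounded_measurableB; exact: bounded_measurableM.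
  by rewrite -mulrBl normrM ler_pM.
have E1 : `|Rintegral P setT f - Rintegral P setT φ| <= δ.
  rewrite -RintegralB ?intg//.
  by apply: normr_Rintegral_le => //; exact: bounded_measurableB.
rewrite (_ : _ - _ = (Rintegral P setT (fun w => f w * k w) -
    Rintegral P setT (fun w => φ w * k w)) -
    (Rintegral P setT f - Rintegral P setT φ) * c);
  last by rewrite level_step_mul; ring.
by rewrite (le_trans (ler_normB _ _))// normrM (le_trans _ δe)// lerD// ler_wpM2r.
Qed.

Lemma Rintegral_mul_indep (F G : set (set T)) (U V : T -> R) :
  (forall A B, F A -> G B -> fine (P (A `&` B)) = fine (P A) * fine (P B)) ->
  bounded_measurable U -> bounded_measurable V ->
  (forall a b, F (U @^-1` `[a, b[)) -> (forall a b, G (V @^-1` `[a, b[)) ->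
  Rintegral P setT (fun w => U w * V w) =
  Rintegral P setT U * Rintegral P setT V.
Proof.
move=> indepFG bU bV FU GV.
have mU := bU.1; have mV := bV.1.
have U_indic B : G B -> measurable B ->
    Rintegral P setT (fun w => U w * \1_B w) = Rintegral P setT U * fine (P B).
  move=> GB mB; apply: Rintegral_mul_of_level_sets => //.
    exact: bounded_measurable_indic.
  move=> a b; rewrite (@eq_Rintegral _ _ _ P setT (\1_(U @^-1` `[a, b[ `&` B))); last first.
    by move=> w _; rewrite indicI.
  rewrite Rintegral_indic ?indepFG//.
  by apply: measurableI => //; exact: measurable_preimage_itv.
under eq_Rintegral do rewrite mulrC.
rewrite (@Rintegral_mul_of_level_sets _ _ (Rintegral P setT U)) 1?[RHS]mulrC// => a b.
under eq_Rintegral do rewrite mulrC.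
by rewrite U_indic 1?[RHS]mulrC//; exact: measurable_preimage_itv.
Qed.

End independent_product.

Section cond_exp_unique.
Context d (T : measurableType d) (R : realType) (P : probability T R).
Variable G : set (set T).
Hypothesis G_meas : G `<=` measurable.
Let F := g_sigma_algebraType G.

Lemma g_sigma_measurable : <<s G>> `<=` measurable.
Proof. by apply: smallest_sub; [exact: sigma_algebra_measurable | exact: G_meas]. Qed.

Lemma g_sigma_measurable_fun (f : T -> R) :
  @measurable_fun _ _ F R setT f -> measurable_fun setT f.
Proof.
move=> mf _ V mV; rewrite setTI; apply: g_sigma_measurable.
by have := mf measurableT V mV; rewrite setTI.
Qed.

Lemma cond_exp_Rintegral_normB (f g h : T -> R) :
  is_cond_exp P <<s G>> f g -> is_cond_exp P <<s G>> f h ->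
  Rintegral P setT (fun w => `|g w - h w|) = 0.
Proof.
move=> [gF [intg gf]] [hF [inth hf]].
have int_sub E u : <<s G>> E -> P.-integrable setT (EFin \o u) ->
    P.-integrable E (EFin \o u).
  by move=> /g_sigma_measurable mE; exact: integrableS measurableT mE (@subsetT _ _).
have Rintegral_gh E : <<s G>> E -> Rintegral P E g = Rintegral P E h.
  by move=> FE; rewrite /Rintegral gf// hf.
have mgF : @measurable_fun _ _ F R setT g by move=> _ V mV; rewrite setTI; exact: gF.
have mhF : @measurable_fun _ _ F R setT h by move=> _ V mV; rewrite setTI; exact: hF.
pose D := (fun w => g w - h w) @^-1` `]0, +oo[.
have FD : <<s G>> D.
  have mk : @measurable_fun _ _ F R setT (fun w => g w - h w) by exact: measurable_funB.
  by have := mk measurableT _ (measurable_itv `]0, +oo[); rewrite setTI.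
have FDC : <<s G>> (~` D) := @measurableC _ F _ FD.
have mD := g_sigma_measurable FD; have mDC := g_sigma_measurable FDC.
rewrite -(setUCr D) Rintegral_setU//; last first.
- by rewrite /disj_set setICr.
- rewrite setUCr; apply: integrable_norm.
  by apply: (eq_integrable measurableT _ _ _ (integrableB measurableT intg inth)).
rewrite (@eq_Rintegral _ _ _ P D (fun w => g w - h w)); last first.
  by move=> w /set_mem; rewrite /D /= in_itv /= andbT => /gtr0_norm.
rewrite (@eq_Rintegral _ _ _ P (~` D) (fun w => h w - g w)); last first.
  move=> w /set_mem; rewrite /D /= in_itv /= andbT => /negP.
  by rewrite -leNgt => /ler0_norm ->; rewrite opprB.
rewrite !RintegralB//; try exact: int_sub.
by rewrite !Rintegral_gh// !subrr addr0.
Qed.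

Lemma cond_exp_ae_eq (f g h : T -> R) :
  is_cond_exp P <<s G>> f g -> is_cond_exp P <<s G>> f h ->
  ae_eq P setT (EFin \o g) (EFin \o h).
Proof.
move=> gf hf; have [gF [intg _]] := gf; have [hF [inth _]] := hf.
have intk : P.-integrable setT (EFin \o (fun w => g w - h w)).
  exact: (eq_integrable measurableT _ _ _ (integrableB measurableT intg inth)).
have : ae_eq P setT (EFin \o (fun w => g w - h w)) (cst 0%E).
  apply/(ae_eq_integral_abs P measurableT); first exact: measurable_int intk.
  have intabs := integrable_norm intk.
  under eq_integral do rewrite abse_EFin.
  rewrite -[LHS]fineK; last exact: integrable_fin_num intabs.
  by rewrite -/(Rintegral P setT (fun w => `|g w - h w|)) (cond_exp_Rintegral_normB gf hf).
apply: filterS => w /= gh0 _; have := gh0 I.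
by move=> -[] /eqP; rewrite subr_eq0 => /eqP ->.
Qed.

Lemma cond_exp_Rintegral_sqr (f g h : T -> R) :
  is_cond_exp P <<s G>> f g -> is_cond_exp P <<s G>> f h ->
  Rintegral P setT (fun w => g w ^+ 2) = Rintegral P setT (fun w => h w ^+ 2).
Proof.
move=> gf hf; have [gF _] := gf; have [hF _] := hf.
have msqr (u : T -> R) : (forall V : set R, measurable V -> <<s G>> (u @^-1` V)) ->
    measurable_fun setT (fun w => (u w ^+ 2)%:E).
  move=> uF; apply/measurable_EFinP/measurable_funX/g_sigma_measurable_fun.
  by move=> _ V mV; rewrite setTI; exact: uF.
rewrite /Rintegral (ae_eq_integral (fun w => (h w ^+ 2)%:E))//;
  [exact: msqr | exact: msqr |].
by apply: filterS (cond_exp_ae_eq gf hf) => w /= gh /gh [->].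
Qed.

End cond_exp_unique.

Lemma partial_sums_geometric_dominated (R : realType) (u : R ^nat) (B g : R) :
  0 <= g < 1 -> (forall n, `|u n| <= B * g ^+ n) ->
  cvgn (fun n => \sum_(h < n) u h) /\
  forall n, `|\sum_(h < n) u h| <= B / (1 - g).
Proof.
move=> /andP[g0 g1] uB; have B0 : 0 <= B by have := uB 0%N; rewrite mulr1; exact: le_trans.
have g_lt1 : `|g| < 1 by rewrite ger0_norm.
have uB' n : `|u n| <= geometric B g n by exact: uB.
have normed_le n : \sum_(h < n) `|u h| <= B / (1 - g).
  apply: le_trans (ler_sum _ (fun (h : 'I_n) _ => uB' h)) _.
  have := geometric_seriesE B (negbT (lt_eqF g1)); move/(congr1 (fun s => s n)).
  rewrite seriesEord /= => ->; rewrite ler_pM2r ?invr_gt0 ?subr_gt0//.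
  by rewrite ler_piMr// lerBlDr lerDl exprn_ge0.
split => [|n]; last by rewrite (le_trans (ler_norm_sum _ _ _)).
have -> : (fun n => \sum_(h < n) u h) = series u by rewrite seriesEord.
apply: normed_cvg; apply: (series_le_cvg _ _ uB'); last exact: is_cvg_geometric_series.
- by move=> n.
- by move=> n; exact: geometric_ge0.
Qed.

Lemma normr_convex_comb_le (R : realType) (I : finType) (c F : I -> R) (B : R) :
  (forall i, 0 <= c i) -> \sum_i c i = 1 -> (forall i, `|F i| <= B) ->
  `|\sum_i c i * F i| <= B.
Proof.
move=> c0 c1 FB; rewrite (le_trans (ler_norm_sum _ _ _))//.
rewrite (@le_trans _ _ (\sum_i c i * B))//; last by rewrite -mulr_suml c1 mul1r.
by apply: ler_sum => i _; rewrite normrM ger0_norm// ler_wpM2l.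
Qed.

Section value_bound.
Variables (R : realType) (S A : finType) (r : S -> A -> R) (gamma : R).
Variable pi : S -> A -> R.
Hypotheses (hpi : is_policy pi) (hgamma : 0 <= gamma < 1).

Definition reward_bound := \sum_x \sum_a `|r x a|.

Lemma normr_reward_le x a : `|r x a| <= reward_bound.
Proof.
rewrite /reward_bound (bigD1 x)//= (bigD1 a)//= -addrA lerDl.
by rewrite addr_ge0 ?sumr_ge0// => *; rewrite sumr_ge0.
Qed.

Lemma normr_step_reward_le q h x : is_trans q ->
  `|step_reward pi r q h x| <= reward_bound.
Proof.
move=> [q0 q1]; elim: h x => [|h IH] x /=;
  apply: normr_convex_comb_le => //; try exact: hpi.1; try exact: hpi.2.
  exact: normr_reward_le.
by move=> a; apply: normr_convex_comb_le.
Qed.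

Lemma value_partial_sums q x : is_trans q ->
  cvgn (fun n => \sum_(h < n) gamma ^+ h * step_reward pi r q h x) /\
  `|value gamma pi r q x| <= reward_bound / (1 - gamma).
Proof.
move=> hq; have [g0 _] := andP hgamma.
have term_le n : `|gamma ^+ n * step_reward pi r q n x| <= reward_bound * gamma ^+ n.
  rewrite normrM ger0_norm ?exprn_ge0// mulrC ler_wpM2r ?exprn_ge0//.
  exact: normr_step_reward_le.
have [cvg bnd] := partial_sums_geometric_dominated hgamma term_le.
split => //; rewrite /value ler_norml.
by apply/andP; split; [apply: limr_ge | apply: limr_le] => //;
  apply: nearW => n; have := bnd n; rewrite ler_norml => /andP[].
Qed.

Lemma measurable_value d (T : measurableType d) (q : T -> S -> A -> S -> R) y :
  (forall w, is_trans (q w)) -> (forall x a z, measurable_fun setT (fun w => q w x a z)) ->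
  measurable_fun setT (fun w => value gamma pi r (q w) y).
Proof.
move=> hq mq.
have mstep h x : measurable_fun setT (fun w => step_reward pi r (q w) h x).
  elim: h x => [|h IH] x /=; first exact: measurable_cst.
  apply: measurable_sum => a; apply: measurable_funM; first exact: measurable_cst.
  by apply: measurable_sum => z; exact: measurable_funM.
apply: (measurable_fun_cvg (h := fun n w =>
  \sum_(h < n) gamma ^+ h * step_reward pi r (q w) h y)) => [n|w _].
  by apply: measurable_sum => h; apply: measurable_funM => //; exact: measurable_cst.
exact: (value_partial_sums y (hq w)).1.
Qed.

End value_bound.

Section acyclic.
Variables (R : realType) (S A : finType) (r : S -> A -> R) (gamma : R).
Variables (pi : S -> A -> R) (rank : S -> nat) (T : {set S}) (s : S).

Definition absorbing_at (q : S -> A -> S -> R) x a z : R :=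
  if x == s then (z == s)%:R else q x a z.

(* A superset of the states reachable from s in one or more steps.  It excludes s
   unless s is terminal, in which case the row of s already is the self-loop of
   [absorbing_at]. *)
Definition downstream (y : S) : bool :=
  if s \in T then y == s else (y != s) && ((y \in T) || (rank s < rank y)%N).

Variable q : S -> A -> S -> R.
Hypothesis q_trans : is_trans q.
Hypothesis q_acyclic : forall x a y, 0 < q x a y ->
  if x \in T then y = x else (rank x < rank y)%N.

Lemma is_trans_absorbing_at : is_trans (absorbing_at q).
Proof.
split=> [x a z|x a]; rewrite /absorbing_at; case: eqP => _; try exact: q_trans.1.
- exact: ler0n.
- by rewrite (bigD1 s)//= eqxx big1 ?addr0// => z /negPf ->.
- exact: q_trans.2.
Qed.

Lemma trans_eq0_or_gt0 x a y : q x a y = 0 \/ 0 < q x a y.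
Proof. by have := q_trans.1 x a y; rewrite le_eqVlt => /orP[/eqP <-|]; [left|right]. Qed.

Lemma downstream_succ a y : 0 < q s a y -> downstream y.
Proof.
move=> /q_acyclic; rewrite /downstream; case: (s \in T) => [->//|srank].
by rewrite srank orbT andbT; apply: contraTneq srank => ->; rewrite ltnn.
Qed.

Lemma downstream_step y a z : downstream y -> 0 < q y a z -> downstream z.
Proof.
move=> + /q_acyclic; rewrite /downstream; case sT : (s \in T).
  by move=> /eqP ->; rewrite sT => ->.
move=> /andP[ys]; case yT : (y \in T); first by move=> _ ->; rewrite ys yT.
move=> /= sy yz.
have sz := ltn_trans sy yz; rewrite sz orbT andbT.
by apply: contraTneq sz => ->; rewrite ltnn.
Qed.

Lemma absorbing_at_downstream y a z : downstream y -> q y a z = absorbing_at q y a z.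
Proof.
rewrite /downstream /absorbing_at; case sT : (s \in T); last by move=> /andP[/negPf ->].
move=> /eqP ->; rewrite eqxx.
have off_s z' : z' != s -> q s a z' = 0.
  move=> z's; have [//|/q_acyclic] := trans_eq0_or_gt0 s a z'.
  by rewrite sT => z'E; rewrite z'E eqxx in z's.
have [->|/off_s//] := eqVneq z s.
have := q_trans.2 s a; rewrite (bigD1 s)//= big1 ?addr0// => z' /off_s //.
Qed.

Lemma step_reward_absorbing_at h y : downstream y ->
  step_reward pi r q h y = step_reward pi r (absorbing_at q) h y.
Proof.
elim: h y => [//|h IH] y yd /=.
apply: eq_bigr => a _; congr (_ * _); apply: eq_bigr => z _.
rewrite -absorbing_at_downstream//; have [->|qz] := trans_eq0_or_gt0 y a z.
  by rewrite !mul0r.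
by rewrite IH//; exact: downstream_step qz.
Qed.

Lemma value_absorbing_at y : downstream y ->
  value gamma pi r q y = value gamma pi r (absorbing_at q) y.
Proof.
move=> yd; rewrite /value; congr (lim (_ @ \oo)); apply: funext => n.
by apply: eq_bigr => h _; rewrite step_reward_absorbing_at.
Qed.

Lemma trans_eq0_off_downstream a y : ~~ downstream y -> q s a y = 0.
Proof.
by have [//|/downstream_succ yd] := trans_eq0_or_gt0 s a y; rewrite yd.
Qed.

End acyclic.

Lemma lambda_system_indep d (T : measurableType d) (R : realType)
    (P : probability T R) (B : set T) : measurable B ->
  lambda_system setT [set C | measurable C /\ P (B `&` C) = (P B * P C)%E].
Proof.
move=> mB; have finP D : measurable D -> P D = (fine (P D))%:E.
  by move=> mD; rewrite fineK// fin_num_measure.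
apply/dynkin_lambda_system; split.
- by split => //; rewrite setIT probability_setT mule1.
- move=> C [mC BC]; split; first exact: measurableC.
  rewrite -setDE measureD//; last by rewrite (le_lt_trans (probability_le1 _ mB))// ltry.
  have -> : (P B - P (B `&` C) = P B - P B * P C)%E by rewrite -BC.
  rewrite probability_setC// (finP _ mB) (finP _ mC).
  by rewrite -EFinM -!EFinB -EFinM; congr EFin; ring.
- move=> F tF hF; split; first by apply: bigcup_measurable => k _; exact: (hF k).1.
  rewrite setI_bigcupr measure_bigcup//; last first.
  + exact: trivIset_setIl.
  + by move=> i _; apply: measurableI => //; exact: (hF i).1.
  transitivity (\sum_(i <oo | i \in setT) (P B * P (F i)))%E.
    by apply: eq_eseriesr => i _; exact: (hF i).2.
  rewrite measure_bigcup//; last by move=> i _; exact: (hF i).1.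
  by rewrite (finP _ mB) nneseriesZl.
Qed.

Section random_transitions.
Variables (R : realType) (S A : finType) (d : measure_display) (Omega : measurableType d).
Variables (P : probability Omega R) (p : Omega -> S -> A -> S -> R).
Hypothesis p_meas : forall x a y, measurable_fun setT (fun w => p w x a y).

Definition state_events x : set (set Omega) :=
  [set E | exists (a : A) (y : S) (V : set R),
     measurable V /\ E = (fun w => p w x a y) @^-1` V].

Lemma state_events_measurable x : state_events x `<=` measurable.
Proof.
move=> _ [a [y [V [mV ->]]]]; rewrite -[_ @^-1` _]setTI; exact: p_meas.
Qed.

Lemma sigma_state_measurable x : sigma_state p x `<=` measurable.
Proof. exact: g_sigma_measurable (@state_events_measurable x). Qed.

Lemma state_measurable_trans x a y :
  @measurable_fun _ _ (g_sigma_algebraType (state_events x)) R setT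
    (fun w => p w x a y).
Proof. by move=> _ V mV; rewrite setTI; apply: sub_sigma_algebra; exists a, y, V. Qed.

Variable s : S.

(* A pi-system generating sigma(P_z, z <> s). *)
Definition others_events : set (set Omega) :=
  [set B | exists E : S -> set Omega, [/\ E s = setT,
     forall z, sigma_state p z (E z) & B = \bigcap_z E z]].

Lemma others_events_measurable : others_events `<=` measurable.
Proof.
move=> _ [E [_ hE ->]]; apply: fin_bigcap_measurable; first exact: finite_finset.
by move=> z _; exact: sigma_state_measurable.
Qed.

Lemma setI_closed_others_events : setI_closed others_events.
Proof.
move=> _ _ [E [Es hE ->]] [E' [Es' hE' ->]].
exists (fun z => E z `&` E' z); split; first by rewrite Es Es' setTI.
  by move=> z; exact: (@measurableI _ (g_sigma_algebraType (state_events z)) _ _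
    (hE z) (hE' z)).
by rewrite bigcapI.
Qed.

Hypothesis p_indep : independent_transitions P p.

Lemma indep_state_others_events B C : sigma_state p s B -> others_events C ->
  fine (P (B `&` C)) = fine (P B) * fine (P C).
Proof.
move=> FB [E [Es hE ->]].
pose E' z := if z == s then B else E z.
have hE' z : sigma_state p z (E' z) by rewrite /E'; case: eqP => [->|].
have -> : B `&` \bigcap_z E z = \bigcap_z E' z.
  apply/seteqP; split => w /=.
    by move=> [Bw Ew] z _; rewrite /E'; case: eqP => // _; exact: Ew.
  move=> E'w; split; first by have := E'w s I; rewrite /E' eqxx.
  by move=> z _; have := E'w z I; rewrite /E'; case: eqP => [->|//]; rewrite Es.
rewrite p_indep// p_indep// (bigD1 s)//= [in RHS](bigD1 s)//= Es probability_setT /= mul1r.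
rewrite /E' eqxx; congr (_ * _); apply: eq_bigr => z /negPf zs.
by rewrite zs.
Qed.

Lemma indep_state_others B C : sigma_state p s B -> <<s others_events >> C ->
  fine (P (B `&` C)) = fine (P B) * fine (P C).
Proof.
move=> FB GC; have mB := sigma_state_measurable FB.
suff: <<s setT, others_events >> `<=`
    [set C | measurable C /\ P (B `&` C) = (P B * P C)%E].
  by move=> /(_ C GC) [mC ->]; rewrite fineM// fin_num_measure.
apply: lambda_system_subset => //.
- exact: setI_closed_others_events.
- exact: lambda_system_indep.
move=> C1 OC1; have mC1 := others_events_measurable OC1; split => //.
have finP D : measurable D -> P D = (fine (P D))%:E.
  by move=> mD; rewrite fineK// fin_num_measure.
by rewrite (finP _ (measurableI _ _ mB mC1)) (finP _ mB) (finP _ mC1)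
  (indep_state_others_events FB OC1) EFinM.
Qed.

End random_transitions.

Lemma trans_le1 (R : realType) (S A : finType) (q : S -> A -> S -> R) x a y :
  is_trans q -> q x a y <= 1.
Proof.
move=> [q0 q1]; rewrite -(q1 x a) (bigD1 y)//= lerDl.
by apply: sumr_ge0 => z _; exact: q0.
Qed.

Section next_value.
Variables (R : realType) (S A : finType) (d : measure_display) (Omega : measurableType d).
Variables (P : probability Omega R) (p : Omega -> S -> A -> S -> R).
Variables (r : S -> A -> R) (gamma : R) (pi : S -> A -> R) (s : S).
Hypothesis p_trans : forall w, is_trans (p w).
Hypothesis p_meas : forall x a y, measurable_fun setT (fun w => p w x a y).

Lemma bounded_measurable_trans x a y : bounded_measurable (fun w => p w x a y).
Proof.
split; first exact: p_meas.
by exists 1 => w; rewrite ger0_norm ?trans_le1//; exact: (p_trans w).1.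
Qed.

Lemma bounded_measurable_trans_avg (F : S -> Omega -> R) :
  (forall y, bounded_measurable (F y)) ->
  bounded_measurable (fun w => \sum_a \sum_y pi s a * p w s a y * F y w).
Proof.
move=> bF; apply: bounded_measurable_sum => a; apply: bounded_measurable_sum => y.
by do ![apply: bounded_measurableM | exact: bounded_measurable_cst |
        exact: bounded_measurable_trans | exact: bF].
Qed.

Lemma Rintegral_trans_avg E (F : S -> Omega -> R) : measurable E ->
  (forall y, bounded_measurable (F y)) ->
  Rintegral P E (fun w => \sum_a \sum_y pi s a * p w s a y * F y w) =
  \sum_a \sum_y pi s a * Rintegral P E (fun w => p w s a y * F y w).
Proof.
move=> mE bF; have bpF a y : bounded_measurable (fun w => p w s a y * F y w).
  exact/bounded_measurableM/bF/bounded_measurable_trans.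
under eq_Rintegral do under eq_bigr do under eq_bigr do rewrite -mulrA.
rewrite Rintegral_sum//; last first.
  by move=> a; apply: bounded_measurable_sum => y;
    apply: bounded_measurableM => //; exact: bounded_measurable_cst.
apply: eq_bigr => a _; rewrite Rintegral_sum//; last first.
  by move=> y; apply: bounded_measurableM => //; exact: bounded_measurable_cst.
apply: eq_bigr => y _; rewrite RintegralZl//.
exact: bounded_measurable_integrable.
Qed.

Lemma Rintegral_var_next (f : S -> R) :
  Rintegral P setT (fun w => var_next pi (p w) s f) =
  \sum_a \sum_y pi s a * Rintegral P setT (fun w => p w s a y) * f y ^+ 2 -
  Rintegral P setT (fun w => (\sum_a \sum_y pi s a * p w s a y * f y) ^+ 2).
Proof.
have bavg (g : S -> R) := bounded_measurable_trans_avg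
  (F := fun y _ => g y) (fun y => bounded_measurable_cst _ (g y)).
rewrite /var_next RintegralB//; first last.
- apply: bounded_measurable_integrable => //.
  by under [X in bounded_measurable X]funext do rewrite expr2; exact: bounded_measurableM.
- exact: bounded_measurable_integrable (bavg _).
congr (_ - _).
rewrite (Rintegral_trans_avg (F := fun y _ => f y ^+ 2))// => [|y]; last first.
  exact: bounded_measurable_cst.
apply: eq_bigr => a _; apply: eq_bigr => y _.
rewrite RintegralZr ?mulrA//; exact/bounded_measurable_integrable/bounded_measurable_trans.
Qed.

Hypotheses (hpi : is_policy pi) (hgamma : 0 <= gamma < 1).

Lemma bounded_measurable_value y :
  bounded_measurable (fun w => value gamma pi r (p w) y).
Proof.
split; first exact: measurable_value.
exists (reward_bound r / (1 - gamma)) => w.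
exact: (value_partial_sums r hpi hgamma y (p_trans w)).2.
Qed.

Lemma others_measurable_absorbing_at x a z :
  @measurable_fun _ _ (g_sigma_algebraType (others_events p s)) R setT
    (fun w => absorbing_at s (p w) x a z).
Proof.
rewrite /absorbing_at; case: eqP => [_|/eqP xs]; first exact: measurable_cst.
move=> _ V mV; rewrite setTI; apply: sub_sigma_algebra.
exists (fun z' => if z' == x then (fun w => p w x a z) @^-1` V else setT); split.
- by rewrite eq_sym (negPf xs).
- move=> z'; case: eqP => [->|_].
    by apply: sub_sigma_algebra; exists a, z, V.
  exact: (@measurableT _ (g_sigma_algebraType (state_events p z'))).
- apply/seteqP; split => w /=; first by move=> Vw z' _; case: eqP.
  by move=> /(_ x I); rewrite eqxx.
Qed.

Lemma others_measurable_value_absorbing_at y :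
  @measurable_fun _ _ (g_sigma_algebraType (others_events p s)) R setT
    (fun w => value gamma pi r (absorbing_at s (p w)) y).
Proof.
apply: (measurable_value r hpi hgamma y) => [w|]; first exact: is_trans_absorbing_at.
exact: others_measurable_absorbing_at.
Qed.

Lemma bounded_measurable_value_absorbing_at y :
  bounded_measurable (fun w => value gamma pi r (absorbing_at s (p w)) y).
Proof.
split.
  apply: (g_sigma_measurable_fun (@others_events_measurable _ _ _ _ _ _ p_meas s)).
  exact: others_measurable_value_absorbing_at.
exists (reward_bound r / (1 - gamma)) => w.
exact: (value_partial_sums r hpi hgamma y (is_trans_absorbing_at s (p_trans w))).2.
Qed.

Hypothesis p_indep : independent_transitions P p.
Variables (rank : S -> nat) (T : {set S}).
Hypothesis p_acyclic : forall w x a y, 0 < p w x a y ->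
  if x \in T then y = x else (rank x < rank y)%N.

Lemma Rintegral_state_event_mul_value E a y : sigma_state p s E ->
  Rintegral P E (fun w => p w s a y * value gamma pi r (p w) y) =
  Rintegral P E (fun w => p w s a y) *
  Rintegral P setT (fun w => value gamma pi r (p w) y).
Proof.
move=> FE; have mE := sigma_state_measurable p_meas FE.
have [yd|ynd] := boolP (downstream rank T s y); last first.
  have p0 w : p w s a y = 0 := trans_eq0_off_downstream (p_trans w) (@p_acyclic w) a ynd.
  under eq_Rintegral do rewrite p0 mul0r.
  by under [in RHS]eq_Rintegral do rewrite p0; rewrite Rintegral_cst// !mul0r.
have V_eq w : value gamma pi r (p w) y = value gamma pi r (absorbing_at s (p w)) y.
  exact: value_absorbing_at (p_trans w) (@p_acyclic w) _ yd.
under eq_Rintegral do rewrite V_eq.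
under [X in _ * X]eq_Rintegral do rewrite V_eq.
rewrite 2!(Rintegral_indicM P E); under eq_Rintegral do rewrite mulrA.
have mstate : @measurable_fun _ _ (g_sigma_algebraType (state_events p s)) R setT
    (fun w => \1_E w * p w s a y).
  apply: measurable_funM; last exact: state_measurable_trans.
  exact: (@measurable_indic _ (g_sigma_algebraType (state_events p s)) R setT E FE).
apply: (Rintegral_mul_indep (F := sigma_state p s) (G := <<s others_events p s >>)).
- by move=> B C FB GC; exact: (indep_state_others p_meas p_indep FB GC).
- apply: bounded_measurableM; first exact: bounded_measurable_indic.
  exact: bounded_measurable_trans.
- exact: bounded_measurable_value_absorbing_at.
- by move=> l u; have := mstate measurableT _ (measurable_itv `[l, u[); rewrite setTI.
- move=> l u; have mV := others_measurable_value_absorbing_at y.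
  by have := mV measurableT _ (measurable_itv `[l, u[); rewrite setTI.
Qed.

Lemma cond_exp_next_value :
  is_cond_exp P (sigma_state p s)
    (fun w => \sum_a \sum_y pi s a * p w s a y * value gamma pi r (p w) y)
    (fun w => \sum_a \sum_y pi s a * p w s a y *
       Rintegral P setT (fun w' => value gamma pi r (p w') y)).
Proof.
pose Vbar y := Rintegral P setT (fun w => value gamma pi r (p w) y).
have bX := bounded_measurable_trans_avg bounded_measurable_value.
have bh := bounded_measurable_trans_avg
  (F := fun y _ => Vbar y) (fun y => bounded_measurable_cst _ (Vbar y)).
split; [|split].
- move=> V mV.
  have mh : @measurable_fun _ _ (g_sigma_algebraType (state_events p s)) R setT
      (fun w => \sum_a \sum_y pi s a * p w s a y * Vbar y).
    apply: measurable_sum => a; apply: measurable_sum => y.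
    apply: measurable_funM; last exact: measurable_cst.
    by apply: measurable_funM; [exact: measurable_cst | exact: state_measurable_trans].
  by have := mh measurableT V mV; rewrite setTI.
- exact: bounded_measurable_integrable bh.
- move=> E FE; have mE := sigma_state_measurable p_meas FE.
  rewrite !bounded_measurable_integralE//.
  rewrite (Rintegral_trans_avg (F := fun y w => value gamma pi r (p w) y))//; last first.
    exact: bounded_measurable_value.
  rewrite (Rintegral_trans_avg (F := fun y _ => Vbar y))// => [|y]; last first.
    exact: bounded_measurable_cst.
  congr EFin; apply: eq_bigr => a _; apply: eq_bigr => y _.
  rewrite Rintegral_state_event_mul_value// RintegralZr//.
  exact/bounded_measurable_integrable/bounded_measurable_trans.
Qed.

End next_value.

Theorem lemma5 (R : realType) (S A : finType) (r : S -> A -> R) (gamma : R)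
    (d : measure_display) (Omega : measurableType d) (P : probability Omega R)
    (p : Omega -> S -> A -> S -> R) :
  0 <= gamma < 1 ->
  (forall w, is_trans (p w)) ->
  (forall x a y, measurable_fun setT (fun w => p w x a y)) ->
  independent_transitions P p ->
  acyclic_model p ->
  forall (s : S) (pi : S -> A -> R), is_policy pi ->
  let Vbar := fun y => Rintegral P setT (fun w => value gamma pi r (p w) y) in
  let pbar := fun a y => Rintegral P setT (fun w => p w s a y) in
  forall g : Omega -> R,
    is_cond_exp P (sigma_state p s)
      (fun w => \sum_(a : A) \sum_(y : S) pi s a * p w s a y * value gamma pi r (p w) y) g ->
    Rintegral P setT (fun w => g w ^+ 2)
    = \sum_(a : A) \sum_(y : S) pi s a * pbar a y * (Vbar y) ^+ 2
      - Rintegral P setT (fun w => var_next pi (p w) s Vbar).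
Proof.
move=> hgamma p_trans p_meas p_indep [rank [T p_acyclic]] s pi hpi Vbar pbar g g_ce.
have h_ce := cond_exp_next_value r s p_trans p_meas hpi hgamma p_indep p_acyclic.
rewrite (cond_exp_Rintegral_sqr (@state_events_measurable _ _ _ _ _ p p_meas s) g_ce h_ce).
by rewrite Rintegral_var_next// opprB addrC subrK.
Qed.
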